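(* Let $p$ be a prime. Let $g(x)\in\mathbb{Z}_p[x]$ be a monic polynomial, let $K$ be a splitting field of $g(x)$ over $\mathbb{Q}_p$, and let $\beta\in K$ be a root of $g(x)$ with $|\beta|_p=1$. Let $e$ be the ramification index of $K/\mathbb{Q}_p$, and let $$q=\begin{cases}1 & \text{if } e<p-1,\\ p^{\lceil \log_p(e+1)\rceil} & \text{if } e\geq p-1,\end{cases}$$ where $\log_p$ here is the real logarithm to base $p$. Then $\left|\left(\frac{\beta}{\omega(\beta)}\right)^q-1\right|_p<p^{-1/(p-1)}$.
   Context: For a finite extension $K/\mathbb{Q}_p$ of degree $d$, $|\cdot|_p$ is the unique absolute value on $K$ extending the $p$-adic absolute value on $\mathbb{Q}_p$; its valuation $\nu_p$ (with $|x|_p=p^{-\nu_p(x)}$) has image $\frac1e\mathbb Z$ on $K^\times$, where $e$ is the ramification index, and $f=d/e$. A uniformizer is $\pi\in K$ with $\nu_p(\pi)=1/e$. Let $\mathcal O_K=\{x\in K:|x|_p\le 1\}$; its residue field $\mathcal O_K/\pi\mathcal O_K$ has $p^f$ elements and $\mathcal O_K$ contains the $(p^f-1)$-st roots of unity, which lie in distinct residue classes mod $\pi$. For $x\in\mathcal O_K$ with $x\not\equiv 0 \pmod \pi$, $\omega(x)$ denotes the unique $(p^f-1)$-st root of unity in $\mathcal O_K$ congruent to $x$ modulo $\pi$. *)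

From HB Require Import structures.
From mathcomp Require Import all_boot all_order all_algebra.
From mathcomp Require Import reals exp.
From Stdlib Require Import ClassicalEpsilon.
Set Implicit Arguments. Unset Strict Implicit. Unset Printing Implicit Defensive.
Import Order.TTheory GRing.Theory Num.Theory.
Local Open Scope ring_scope.

(* A finite extension K of Q_p, described intrinsically: a field K with an
   absolute value abs : K -> R (the unique extension of |.|_p), which is
   multiplicative and ultrametric with |p| = 1/p, complete, and finite
   dimensional over the closure of Q in K (which is Q_p). *)

Section PadicDefs.
Variables (R : realType) (K : fieldType) (abs : K -> R).

(* the closure of Q in K, i.e. Q_p inside K *)
Definition in_Qp (x : K) : Prop :=
  forall eps : R, 0 < eps -> exists r : rat, abs (x - ratr r) < eps.

Definition in_Zp (x : K) : Prop := in_Qp x /\ abs x <= 1.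

Definition in_OK (x : K) : Prop := abs x <= 1.

Definition cauchy_seq (u : nat -> K) : Prop :=
  forall eps : R, 0 < eps -> exists N, forall m n, (N <= m)%N -> (N <= n)%N ->
    abs (u m - u n) < eps.

Definition converges (u : nat -> K) : Prop :=
  exists l : K, forall eps : R, 0 < eps -> exists N, forall n, (N <= n)%N ->
    abs (u n - l) < eps.

Definition finite_over_Qp : Prop :=
  exists s : seq K, forall x : K, exists c : seq K,
    [/\ size c = size s, (forall i, in_Qp (nth 0 c i)) &
        x = \sum_(i < size s) nth 0 c i * nth 0 s i].

Record padic_field (p : nat) : Prop := PadicField {
  pf_abs0 : abs 0 = 0;
  pf_abs_eq0 : forall x, abs x = 0 -> x = 0;
  pf_absM : forall x y, abs (x * y) = abs x * abs y;
  pf_ultra : forall x y, abs (x + y) <= Num.max (abs x) (abs y);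
  pf_abs_p : abs p%:R = (p%:R)^-1;
  pf_complete : forall u, cauchy_seq u -> converges u;
  pf_finite : finite_over_Qp
}.

Definition generated_over_Qp (rs : seq K) : Prop :=
  forall S : K -> Prop,
    (forall x, in_Qp x -> S x) -> (forall x, x \in rs -> S x) ->
    (forall x y, S x -> S y -> S (x + y)) ->
    (forall x, S x -> S (- x)) ->
    (forall x y, S x -> S y -> S (x * y)) ->
    (forall x, x != 0 -> S x -> S x^-1) ->
    forall x, S x.

Definition splitting_field_over_Qp (g : {poly K}) : Prop :=
  exists rs : seq K,
    g = \prod_(r <- rs) ('X - r%:P) /\ generated_over_Qp rs.

Definition ram_index (p e : nat) : Prop :=
  (0 < e)%N /\
  (forall x : K, x != 0 -> exists k : int, abs x = powR p%:R (k%:~R / e%:R)) /\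
  (exists pi : K, abs pi = powR p%:R (- (e%:R)^-1)).

(* the residue field O_K / pi O_K has exactly n elements *)
Definition residue_card (n : nat) : Prop :=
  exists reps : seq K,
    [/\ size reps = n,
        (forall r, r \in reps -> in_OK r),
        (forall i j, (i < n)%N -> (j < n)%N -> i <> j ->
           ~ (abs (nth 0 reps i - nth 0 reps j) < 1)) &
        (forall x, in_OK x -> exists2 r, r \in reps & abs (x - r) < 1)].

Definition residue_degree (p f : nat) : Prop := residue_card (p ^ f).

Definition omega (p f : nat) (x : K) : K :=
  epsilon (inhabits 0)
    (fun z : K => z ^+ (p ^ f).-1 = 1 /\ abs (x - z) < 1).

End PadicDefs.

Definition qexp (R : realType) (p e : nat) : nat :=
  if (e < p.-1)%N then 1%N
  else (p ^ `|Num.ceil (ln (e.+1%:R : R) / ln (p%:R : R))|)%N.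

From HB Require Import structures.
From mathcomp Require Import all_boot all_order all_algebra.
From mathcomp Require Import reals exp.
From mathcomp Require Import ring lra zify.
From Stdlib Require Import ClassicalEpsilon.
Set Implicit Arguments. Unset Strict Implicit. Unset Printing Implicit Defensive.
Import Order.TTheory GRing.Theory Num.Theory.
Local Open Scope ring_scope.

(* Put [u = beta / omega(beta)]; then [|u - 1| < 1], hence [|u - 1| <= p^(-1/e)] by
   discreteness of the valuation.  If [e < p - 1] this is already below
   [p^(-1/(p-1))].  Otherwise the binomial theorem gives
   [|v^p - 1| <= max (|v - 1|^p, |v - 1|/p)] for units [v]: each [p]-th power either
   pushes [|v - 1|] below [p^(-1/(p-1))] for good, or raises the bound [p^(-1/e)] to its
   [p]-th power, and [p^(-p^m/e) < 1/p] as soon as [p^m > e].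
   The lift [omega(beta)] exists as the limit of [beta^(p^(f n))], a Cauchy sequence
   since [x |-> x^(p^f)] contracts units; it is congruent to [beta] because
   [x^(p^f - 1)] is 1 modulo the maximal ideal (Fermat in the residue field). *)

Lemma exists_expr_lt (R : realType) (r eps : R) : 0 <= r < 1 -> 0 < eps ->
  exists n, r ^+ n < eps.
Proof.
case/andP=> r_ge0 r_lt1 eps_gt0.
have [->|r_neq0] := eqVneq r 0; first by exists 1%N; rewrite expr1.
have r_gt0 : 0 < r by rewrite lt_def r_neq0.
have lnr_lt0 : ln r < 0 by rewrite ln_lt0 // r_gt0.
pose x := `|ln eps / ln r|.
exists (Num.Def.archi_bound x).
have x_lt := archi_boundP (normr_ge0 (ln eps / ln r)).
rewrite -(powR_mulrn _ (ltW r_gt0)) /powR (gt_eqF r_gt0) -[X in _ < X]lnK //.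
by rewrite ltr_expR -ltr_ndivrMr //; apply: le_lt_trans (ler_norm _) x_lt.
Qed.

Lemma ler_powR_mono (R : realType) (a : R) : 1 < a -> {mono powR a : x y / x <= y}.
Proof.
move=> a_gt1 x y; rewrite /powR gt_eqF ?(lt_trans ltr01) // ler_expR.
by rewrite ler_pM2r // ln_gt0.
Qed.

Lemma powR_exprn (R : realType) (a y : R) n : 0 <= a -> powR a y ^+ n = powR a (y * n%:R).
Proof. by move=> a_ge0; rewrite powRrM powR_mulrn // powR_ge0. Qed.

Lemma natr_pred (R : realType) n : (0 < n)%N -> (n.-1%:R : R) = n%:R - 1.
Proof. by move=> n_gt0; rewrite -subn1 natrB. Qed.

Lemma powR_inv_pred_exprn (R : realType) p : (1 < p)%N ->
  powR (p%:R : R) (- (p%:R - 1)^-1) ^+ p.-1 = p%:R^-1.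
Proof.
move=> p_gt1; rewrite powR_exprn ?ler0n // natr_pred ?(ltnW p_gt1) // mulNr mulVf.
  by rewrite powR_inv1 ?ler0n.
by rewrite subr_eq0 pnatr_eq1 gtn_eqF.
Qed.

Lemma qexp_large (R : realType) p e : (1 < p)%N -> (p.-1 <= e)%N ->
  exists2 m, qexp R p e = (p ^ m)%N & (e < p ^ m)%N.
Proof.
move=> p_gt1 e_ge; rewrite /qexp ltnNge e_ge /=; eexists => //.
set x := ln (e.+1%:R : R) / ln (p%:R : R).
have lnp_gt0 : 0 < ln (p%:R : R) by rewrite ln_gt0 // ltr1n.
have x_ge0 : 0 <= x by rewrite divr_ge0 ?(ltW lnp_gt0) // ln_ge0 // ler1n.
have ceil_x : (`|Num.ceil x|%N%:R : R) = (Num.ceil x)%:~R.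
  by rewrite natr_absz ger0_norm // ceil_ge0 (lt_le_trans _ x_ge0) // ltrN10.
have p_gt0 := ltnW p_gt1.
rewrite -(ler_nat R) -ler_ln ?posrE ?ltr0n ?expn_gt0 ?p_gt0 //.
rewrite natrX lnXn ?ltr0n // -[ln _ *+ _]mulr_natr ceil_x mulrC -ler_pdivrMr //.
exact: ceil_ge.
Qed.

Section PadicAbsolute.
Variables (R : realType) (K : fieldType) (abs : K -> R) (p : nat).
Hypotheses (p_prime : prime p) (Kp : padic_field abs p).
Hypothesis abs_gt0 : forall x, x != 0 -> 0 < abs x.

Let p_gt0R : (0 : R) < p%:R.
Proof. by rewrite ltr0n prime_gt0. Qed.

Let p_gt1R : (1 : R) < p%:R.
Proof. by rewrite ltr1n prime_gt1. Qed.

Let absM := pf_absM Kp.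
Let abs0 := pf_abs0 Kp.

Lemma abs_ge0 x : 0 <= abs x.
Proof. by have [->|/abs_gt0/ltW] := eqVneq x 0; rewrite ?abs0. Qed.

Lemma abs1 : abs 1 = 1.
Proof.
have := absM p%:R 1; rewrite mulr1 (pf_abs_p Kp) => h.
by apply: (mulfI (invr_neq0 (lt0r_neq0 p_gt0R))); rewrite -h mulr1.
Qed.

Lemma absN x : abs (- x) = abs x.
Proof.
suff absN1 : abs (-1) = 1 by rewrite -mulN1r absM absN1 mul1r.
have := absM (-1) (-1); rewrite mulrNN mulr1 abs1 => h.
have := abs_ge0 (-1); nra.
Qed.

Lemma abs_distC x y : abs (x - y) = abs (y - x).
Proof. by rewrite -absN opprB. Qed.

Lemma absX x n : abs (x ^+ n) = abs x ^+ n.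
Proof. by elim: n => [|n IH]; rewrite ?expr0 ?abs1 // !exprS absM IH. Qed.

Lemma absV x : abs x^-1 = (abs x)^-1.
Proof.
have [->|x_neq0] := eqVneq x 0; first by rewrite invr0 abs0 invr0.
have := absM x x^-1; rewrite mulfV // abs1 => h.
by apply: (mulfI (lt0r_neq0 (abs_gt0 x_neq0))); rewrite -h mulfV // gt_eqF ?abs_gt0.
Qed.

Lemma abs_eq1_neq0 x : abs x = 1 -> x != 0.
Proof. by apply: contra_eqN => /eqP ->; rewrite abs0 eq_sym oner_eq0. Qed.

Lemma abs_add_le x y B : abs x <= B -> abs y <= B -> abs (x + y) <= B.
Proof. by move=> hx hy; apply: le_trans (pf_ultra Kp x y) _; rewrite ge_max hx. Qed.

Lemma abs_add_lt x y B : abs x < B -> abs y < B -> abs (x + y) < B.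
Proof. by move=> hx hy; apply: le_lt_trans (pf_ultra Kp x y) _; rewrite gt_max hx. Qed.

Lemma abs_sub_le x y B : abs x <= B -> abs y <= B -> abs (x - y) <= B.
Proof. by move=> hx hy; apply: abs_add_le; rewrite ?absN. Qed.

Lemma abs_sub_lt x y B : abs x < B -> abs y < B -> abs (x - y) < B.
Proof. by move=> hx hy; apply: abs_add_lt; rewrite ?absN. Qed.

Lemma abs_sum_le (I : Type) (r : seq I) (P : pred I) (F : I -> K) B :
  0 <= B -> (forall i, P i -> abs (F i) <= B) -> abs (\sum_(i <- r | P i) F i) <= B.
Proof.
move=> B_ge0 hF; apply: (big_ind (fun x => abs x <= B)) => //.
  by rewrite abs0.
move=> x y hx hy; exact: (abs_add_le hx hy).
Qed.

Lemma abs_natr_le1 n : abs n%:R <= 1.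
Proof.
elim: n => [|n IH]; first by rewrite abs0 ler01.
by rewrite -natr1; apply: abs_add_le; rewrite ?abs1.
Qed.

Lemma abs_eq1_close x y : abs x = 1 -> abs (x - y) < 1 -> abs y = 1.
Proof.
move=> hx hxy; have -> : y = x - (x - y) by rewrite opprB addrC subrK.
apply/eqP; rewrite eq_le; apply/andP; split.
  by apply: abs_sub_le; rewrite ?hx // ltW.
rewrite leNgt; apply/negP => lt1.
by have := abs_add_lt lt1 hxy; rewrite subrK hx ltxx.
Qed.

Lemma abs_div_close x y : abs x = 1 -> abs (x - y) < 1 ->
  abs (x / y) = 1 /\ abs (x / y - 1) < 1.
Proof.
move=> hx hxy; have hy := abs_eq1_close hx hxy.
have -> : x / y - 1 = (x - y) / y by rewrite mulrBl divff ?abs_eq1_neq0.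
by rewrite !absM absV hx hy invr1 !mulr1.
Qed.

Lemma abs_eq0_small x : (forall eps, 0 < eps -> abs x < eps) -> x = 0.
Proof.
move=> small; apply/eqP; apply/negPn/negP => /abs_gt0 x_gt0.
by have := small _ x_gt0; rewrite ltxx.
Qed.

Lemma abs_prod_sub_lt1 (I : finType) (P : pred I) (F G : I -> K) :
  (forall i, P i -> [/\ abs (F i) <= 1, abs (G i) <= 1 & abs (F i - G i) < 1]) ->
  abs (\prod_(i | P i) F i - \prod_(i | P i) G i) < 1.
Proof.
move=> hFG; suff [] : [/\ abs (\prod_(i | P i) F i) <= 1,
  abs (\prod_(i | P i) G i) <= 1 & abs (\prod_(i | P i) F i - \prod_(i | P i) G i) < 1] by [].
apply: (big_ind2 (fun a b => [/\ abs a <= 1, abs b <= 1 & abs (a - b) < 1])) => //.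
  by rewrite abs1 subrr abs0 ltr01.
move=> a1 b1 a2 b2 [ha1 hb1 hab1] [ha2 hb2 hab2].
have ge0 := abs_ge0; rewrite !absM; split; rewrite ?mulr_ile1 //.
have -> : a1 * a2 - b1 * b2 = a1 * (a2 - b2) + (a1 - b1) * b2 by ring.
apply: abs_add_lt; rewrite absM.
  by apply: le_lt_trans hab2; rewrite ler_piMl.
by apply: le_lt_trans hab1; rewrite ler_piMr.
Qed.

Lemma abs_exprD1p_sub1 t : abs t <= 1 ->
  abs ((1 + t) ^+ p - 1) <= Num.max (abs t ^+ p) (abs t / p%:R).
Proof.
move=> t_le1; have t_ge0 := abs_ge0 t.
rewrite [1 + t]addrC exprD1n big_ord_recl /= expr0 bin0 mulr1n [1 + _]addrC addrK.
apply: abs_sum_le => [|i _]; first by rewrite le_max exprn_ge0.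
rewrite /bump add1n -mulr_natr absM absX le_max.
have [->|i_ne] := eqVneq i.+1 p; first by rewrite binn abs1 mulr1 lexx.
have /dvdnP [m ->] : (p %| 'C(p, i.+1))%N.
  by apply: prime_dvd_bin; rewrite //= ltn_neqAle i_ne ltn_ord.
apply/orP; right.
rewrite natrM absM (pf_abs_p Kp) mulrA ler_pM2r ?invr_gt0 //.
rewrite -[X in _ <= X]mulr1 ler_pM ?exprn_ge0 ?abs_natr_le1 ?abs_ge0 //.
by rewrite exprS ler_piMr // exprn_ile1.
Qed.

Lemma abs_unit_sub_le1 x y : abs x = 1 -> abs y = 1 -> abs (x - y) <= 1.
Proof. by move=> hx hy; apply: abs_sub_le; rewrite ?hx ?hy. Qed.

Lemma abs_exppB x y : abs x = 1 -> abs y = 1 ->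
  abs (x ^+ p - y ^+ p) <= Num.max (abs (x - y) ^+ p) (abs (x - y) / p%:R).
Proof.
move=> hx hy; have y_neq0 := abs_eq1_neq0 hy.
set t := (x - y) / y.
have abs_t : abs t = abs (x - y) by rewrite absM absV hy invr1 mulr1.
have y_1t : y * (1 + t) = x by rewrite mulrDr mulr1 mulrC /t divfK // subrKC.
have -> : x ^+ p - y ^+ p = y ^+ p * ((1 + t) ^+ p - 1).
  by rewrite mulrBr mulr1 -exprMn y_1t.
by rewrite absM absX hy expr1n mul1r -abs_t abs_exprD1p_sub1 // abs_t abs_unit_sub_le1.
Qed.

Lemma abs_exppB_contract x y d : abs x = 1 -> abs y = 1 -> abs (x - y) <= d ->
  abs (x ^+ p - y ^+ p) <= Num.max d p%:R^-1 * abs (x - y).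
Proof.
move=> hx hy hd; apply: le_trans (abs_exppB hx hy) _.
have a_ge0 := abs_ge0 (x - y); have a_le1 := abs_unit_sub_le1 hx hy.
rewrite ge_max; apply/andP; split.
  rewrite -{1}(prednK (prime_gt0 p_prime)) exprSr ler_wpM2r // le_max; apply/orP; left.
  apply: le_trans hd; rewrite -[X in _ <= X]expr1; apply: ler_wiXn2l => //.
  by rewrite -ltnS prednK ?prime_gt0 ?prime_gt1.
by rewrite mulrC ler_wpM2r // le_max lexx orbT.
Qed.

Lemma abs_exppB_le x y : abs x = 1 -> abs y = 1 -> abs (x ^+ p - y ^+ p) <= abs (x - y).
Proof.
move=> hx hy; apply: le_trans (abs_exppB_contract hx hy (abs_unit_sub_le1 hx hy)) _.
by rewrite ler_piMl ?abs_ge0 // ge_max lexx invf_le1 // ler1n prime_gt0.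
Qed.

Lemma abs_unitX x n : abs x = 1 -> abs (x ^+ n) = 1.
Proof. by move=> hx; rewrite absX hx expr1n. Qed.

Lemma abs_exppnB_le x y k : abs x = 1 -> abs y = 1 ->
  abs (x ^+ (p ^ k) - y ^+ (p ^ k)) <= abs (x - y).
Proof.
elim: k => [|k IH] hx hy; first by rewrite expn0 !expr1.
rewrite expnSr !exprM; apply: le_trans (IH hx hy).
by apply: abs_exppB_le; apply: abs_unitX.
Qed.

Lemma abs_exppnB_contract x y d k : (0 < k)%N -> abs x = 1 -> abs y = 1 ->
  abs (x - y) <= d -> abs (x ^+ (p ^ k) - y ^+ (p ^ k)) <= Num.max d p%:R^-1 * abs (x - y).
Proof.
case: k => // k _ hx hy hd; have close := abs_exppnB_le k hx hy.
rewrite expnSr !exprM.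
apply: le_trans (abs_exppB_contract (abs_unitX _ hx) (abs_unitX _ hy) (le_trans close hd)) _.
by rewrite ler_wpM2l // le_max invr_ge0 ler0n orbT.
Qed.

Section ResidueField.
Variables (N : nat) (reps : seq K).
Hypotheses (size_reps : size reps = N) (reps_le1 : forall r, r \in reps -> abs r <= 1).
Hypothesis reps_apart : forall i j, (i < N)%N -> (j < N)%N -> i <> j ->
  ~ abs (nth 0 reps i - nth 0 reps j) < 1.
Hypothesis reps_cover : forall x, abs x <= 1 -> exists2 r, r \in reps & abs (x - r) < 1.

Lemma residue_card_gt0 : (0 < N)%N.
Proof.
have [|r r_in _] := reps_cover (x := 0); first by rewrite abs0.
by rewrite -size_reps; case: (reps) r_in.
Qed.

Definition rep (i : 'I_N) : K := nth 0 reps i.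

Definition residue (y : K) : 'I_N :=
  odflt (Ordinal residue_card_gt0) [pick i | abs (y - rep i) < 1].

Lemma rep_le1 i : abs (rep i) <= 1.
Proof. by apply: reps_le1; apply: mem_nth; rewrite size_reps. Qed.

Lemma residueP y : abs y <= 1 -> abs (y - rep (residue y)) < 1.
Proof.
move=> /reps_cover [r r_in close]; rewrite /residue; case: pickP => [i //|none].
have i_lt : (index r reps < N)%N by rewrite -size_reps index_mem.
by have := none (Ordinal i_lt); rewrite /rep /= nth_index // close.
Qed.

Lemma rep_close_inj i j : abs (rep i - rep j) < 1 -> i = j.
Proof.
move=> close; apply/val_inj/eqP/negPn/negP => /eqP ne.
exact: (reps_apart (ltn_ord i) (ltn_ord j) ne).
Qed.

Lemma residue_eq y i : abs (y - rep i) < 1 -> residue y = i.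
Proof.
move=> close; have y_le1 : abs y <= 1.
  by rewrite -(subrK (rep i) y); apply: abs_add_le (ltW close) (rep_le1 i).
apply: rep_close_inj.
have -> : rep (residue y) - rep i = (y - rep i) - (y - rep (residue y)) by ring.
exact: abs_sub_lt close (residueP y_le1).
Qed.

Section UnitAction.
Variable x : K.
Hypothesis x_unit : abs x = 1.

Let abs_mulx y : abs (x * y) = abs y.
Proof. by rewrite absM x_unit mul1r. Qed.

Definition residue_mul (i : 'I_N) : 'I_N := residue (x * rep i).

Lemma residue_mulP i : abs (x * rep i - rep (residue_mul i)) < 1.
Proof. by apply: residueP; rewrite abs_mulx rep_le1. Qed.

Lemma residue_mul_inj : injective residue_mul.
Proof.
move=> i j eq_ij; apply: rep_close_inj; rewrite -abs_mulx.
have -> : x * (rep i - rep j) =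
  (x * rep i - rep (residue_mul i)) - (x * rep j - rep (residue_mul j)) by rewrite eq_ij; ring.
exact: abs_sub_lt (residue_mulP i) (residue_mulP j).
Qed.

Lemma residue_mul0 : residue_mul (residue 0) = residue 0.
Proof.
have close0 : abs (0 - rep (residue 0)) < 1 by apply: residueP; rewrite abs0.
rewrite sub0r absN in close0.
by apply: residue_eq; apply: abs_sub_lt; rewrite ?abs_mulx.
Qed.

(* Multiplication by [x] permutes the nonzero residue classes; comparing the
   products of their representatives before and after gives [x ^+ (N - 1) = 1]. *)
Lemma expr_residue_card_sub1 : abs (x ^+ N.-1 - 1) < 1.
Proof.
pose i0 := residue 0; pose P := \prod_(i | i != i0) rep i.
have rep_unit i : i != i0 -> abs (rep i) = 1.
  move=> ne; apply/eqP; rewrite eq_le rep_le1 leNgt; apply/negP => lt1.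
  by move/eqP: ne; apply; symmetry; apply: residue_eq; rewrite sub0r absN.
have abs_P : abs P = 1.
  apply: (big_ind (fun a => abs a = 1)) => [|a b ha hb|]; rewrite ?abs1 //.
  by rewrite absM ha hb mulr1.
have P_perm : P = \prod_(i | i != i0) rep (residue_mul i).
  rewrite /P (reindex_inj residue_mul_inj); apply: eq_bigl => i /=.
  by rewrite /i0 -{1}residue_mul0 (inj_eq residue_mul_inj).
have := abs_prod_sub_lt1 (P := fun i => i != i0) (F := fun i => x * rep i)
  (G := fun i => rep (residue_mul i)).
rewrite -P_perm prodrMl cardC1 card_ord -/P.
have -> : x ^+ N.-1 * P - P = (x ^+ N.-1 - 1) * P by ring.
rewrite absM abs_P mulr1; apply => i _.
by split; rewrite ?abs_mulx ?rep_le1 ?residue_mulP.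
Qed.

End UnitAction.
End ResidueField.

Lemma residue_card_fermat N x : residue_card abs N -> abs x = 1 ->
  abs (x ^+ N.-1 - 1) < 1.
Proof.
case=> reps [size_reps le1 apart cover].
exact: (expr_residue_card_sub1 size_reps le1 apart cover).
Qed.

Section Teichmuller.
Variables (f : nat) (beta : K).
Hypotheses (f_gt0 : (0 < f)%N) (res_card : residue_card abs (p ^ f)).
Hypothesis beta_unit : abs beta = 1.

Let N := (p ^ f)%N.
Let d0 := abs (beta ^+ N - beta).
Let rho := Num.max d0 p%:R^-1.
Let u n := beta ^+ (N ^ n).

Let N_gt0 : (0 < N)%N.
Proof. by rewrite expn_gt0 prime_gt0. Qed.

Let u_succ n : u n.+1 = u n ^+ N.
Proof. by rewrite /u expnSr exprM. Qed.

Let u_unit n : abs (u n) = 1.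
Proof. exact: abs_unitX. Qed.

Let d0_lt1 : d0 < 1.
Proof.
rewrite /d0 -[in beta ^+ N](prednK N_gt0) exprS.
have -> : beta * beta ^+ N.-1 - beta = beta * (beta ^+ N.-1 - 1) by ring.
by rewrite absM beta_unit mul1r (residue_card_fermat res_card beta_unit).
Qed.

Let rho_ge0 : 0 <= rho.
Proof. by rewrite le_max invr_ge0 ler0n orbT. Qed.

Let rho_lt1 : rho < 1.
Proof. by rewrite gt_max d0_lt1 invf_lt1 // ltr1n prime_gt1. Qed.

Let rho_ge0_lt1 : 0 <= rho < 1.
Proof. by rewrite rho_ge0 rho_lt1. Qed.

Let rhoX_le m n : (n <= m)%N -> rho ^+ m <= rho ^+ n.
Proof. exact: ler_wiXn2l rho_ge0 (ltW rho_lt1) m n. Qed.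

Lemma teich_seq_step n : abs (u n.+1 - u n) <= rho ^+ n * d0.
Proof.
elim: n => [|n IH]; first by rewrite mul1r /u expn0 expn1 expr1.
have -> : u n.+2 - u n.+1 = u n.+1 ^+ N - u n ^+ N by rewrite -!u_succ.
rewrite exprS -mulrA.
apply: le_trans (abs_exppnB_contract (d := d0) f_gt0 (u_unit _) (u_unit _) _) _.
  by apply: le_trans IH (ler_piMl (abs_ge0 _) (exprn_ile1 _ rho_ge0 (ltW rho_lt1))).
exact: ler_wpM2l rho_ge0 _ _ IH.
Qed.

Lemma teich_seq_close m n : (n <= m)%N -> abs (u m - u n) <= rho ^+ n * d0.
Proof.
move=> /subnKC <-; elim: (m - n)%N => [|k IH].
  by rewrite addn0 subrr abs0 mulr_ge0 ?exprn_ge0 ?abs_ge0.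
have -> : u (n + k.+1)%N - u n = (u (n + k).+1 - u (n + k)%N) + (u (n + k)%N - u n).
  by rewrite addnS; ring.
apply: abs_add_le IH; apply: le_trans (teich_seq_step _) _.
by rewrite ler_wpM2r ?abs_ge0 ?rhoX_le ?leq_addr.
Qed.

Lemma teich_seq_cauchy : cauchy_seq abs u.
Proof.
move=> eps eps_gt0; have [n0 small] := exists_expr_lt rho_ge0_lt1 eps_gt0.
have close_n0 m : (n0 <= m)%N -> abs (u m - u n0) < eps.
  move=> /teich_seq_close le; apply: le_lt_trans le (le_lt_trans _ small).
  exact: ler_piMr (exprn_ge0 _ rho_ge0) (ltW d0_lt1).
exists n0 => m n hm hn.
have -> : u m - u n = (u m - u n0) - (u n - u n0) by ring.
exact: abs_sub_lt (close_n0 m hm) (close_n0 n hn).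
Qed.

Lemma exists_root_of_unity_close : exists z, z ^+ N.-1 = 1 /\ abs (beta - z) < 1.
Proof.
have [l lim_l] := pf_complete Kp teich_seq_cauchy.
have beta_l : abs (beta - l) < 1.
  have [n hn] := lim_l 1 ltr01; rewrite -(subrKA (u n)); apply: abs_add_lt (hn n _) => //.
  rewrite abs_distC; apply: le_lt_trans (teich_seq_close (leq0n n)) _.
  by rewrite expr0 mul1r.
have l_unit := abs_eq1_close beta_unit beta_l.
have l_fixed : l ^+ N = l.
  apply/eqP; rewrite -subr_eq0; apply/eqP; apply: abs_eq0_small => eps eps_gt0.
  have [n1 hn1] := lim_l eps eps_gt0.
  have [n2 hn2] := exists_expr_lt rho_ge0_lt1 eps_gt0.
  have lim_n := hn1 (n1 + n2)%N (leq_addr _ _).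
  have -> : l ^+ N - l = (l ^+ N - u (n1 + n2) ^+ N) + (u (n1 + n2).+1 - u (n1 + n2)%N)
      + (u (n1 + n2)%N - l) by rewrite u_succ; ring.
  apply: (abs_add_lt _ lim_n); apply: abs_add_lt.
    by apply: le_lt_trans (abs_exppnB_le f l_unit (u_unit _)) _; rewrite abs_distC.
  apply: le_lt_trans (teich_seq_step _) (le_lt_trans _ hn2).
  exact: le_trans (ler_piMr (exprn_ge0 _ rho_ge0) (ltW d0_lt1)) (rhoX_le (leq_addl _ _)).
exists l; split => //; apply: (mulfI (abs_eq1_neq0 l_unit)).
by rewrite -exprS prednK // l_fixed mulr1.
Qed.

End Teichmuller.

(* With [s := |v - 1|]: once [s ^ (p - 1) >= 1/p], the binomial bound
   [max (s ^ p) (s / p)] on [|v ^ p - 1|] is [s ^ p]; below that threshold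
   [|v ^ p - 1| <= s] keeps it there. *)
Lemma abs_exppn_sub1_cases u c j : abs u = 1 -> abs (u - 1) <= c ->
  abs (u ^+ (p ^ j) - 1) ^+ p.-1 < p%:R^-1 \/ abs (u ^+ (p ^ j) - 1) <= c ^+ (p ^ j).
Proof.
move=> u_unit u_close; elim: j => [|j IH]; first by right; rewrite expn0 !expr1.
rewrite expnSr !exprM; set v := u ^+ (p ^ j) in IH *; set s := abs (v - 1) in IH *.
have v_unit : abs v = 1 := abs_unitX _ u_unit.
have s_ge0 : 0 <= s := abs_ge0 _.
have := abs_exppB v_unit abs1; rewrite expr1n -/s => binom.
have [small|large] := ltP (s ^+ p.-1) p%:R^-1.
  left; apply: le_lt_trans small; rewrite lerXn2r ?nnegrE ?abs_ge0 //.
  by have := abs_exppB_le v_unit abs1; rewrite expr1n.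
case: IH => [small|s_le]; first by rewrite leNgt small in large.
right; apply: le_trans binom _; rewrite ge_max.
have s_p : s ^+ p <= (c ^+ (p ^ j)) ^+ p by rewrite lerXn2r ?nnegrE // (le_trans s_ge0).
rewrite s_p /=; apply: le_trans s_p.
by rewrite -{2}(prednK (prime_gt0 p_prime)) exprSr mulrC ler_wpM2r.
Qed.

Lemma abs_expr_qexp_sub1_lt e u : (0 < e)%N -> abs u = 1 ->
  abs (u - 1) <= powR (p%:R : R) (- e%:R^-1) ->
  abs (u ^+ qexp R p e - 1) < powR (p%:R : R) (- (p%:R - 1)^-1).
Proof.
move=> e_gt0 u_unit u_close; have p_gt1 := prime_gt1 p_prime.
have ltr_powRp := leW_mono (ler_powR_mono p_gt1R).
have p_gt0 := prime_gt0 p_prime.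
have p1_gt0 : (0 : R) < p%:R - 1 by rewrite subr_gt0 ltr1n.
have [e_small|e_large] := ltnP e p.-1.
  rewrite /qexp e_small expr1; apply: le_lt_trans u_close _.
  by rewrite ltr_powRp ltrN2 ltf_pV2 ?posrE ?ltr0n // -natr_pred // ltr_nat.
have [m -> e_lt] := qexp_large R p_gt1 e_large.
have B_ge0 := powR_ge0 (p%:R : R) (- (p%:R - 1)^-1).
case: (abs_exppn_sub1_cases m u_unit u_close) => [small|dist_le].
  rewrite -(ltr_pXn2r (n := p.-1)) ?nnegrE ?abs_ge0 //; last by rewrite -ltnS prednK.
  by rewrite powR_inv_pred_exprn.
apply: le_lt_trans dist_le _; rewrite powR_exprn ?ler0n // ltr_powRp mulNr ltrN2.
have e_ltR : (e%:R : R) < (p ^ m)%:R by rewrite ltr_nat.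
apply: le_lt_trans (_ : 1 < _).
  by rewrite invf_le1 // -natr_pred // ler1n -ltnS prednK.
by rewrite mulrC ltr_pdivlMr ?ltr0n // mul1r.
Qed.

Lemma omega_close f beta : residue_degree abs p f -> abs beta = 1 ->
  abs (beta - omega abs p f beta) < 1.
Proof.
move=> res_deg beta_unit.
have teich : exists z, z ^+ (p ^ f).-1 = 1 /\ abs (beta - z) < 1.
  have [->|f_gt0] := posnP f; last exact: exists_root_of_unity_close.
  by exists beta; rewrite expn0 expr0 subrr abs0 ltr01.
by have [] := epsilon_spec (inhabits 0) _ teich.
Qed.

Lemma ram_index_abs_lt1 e x : ram_index abs p e -> abs x < 1 ->
  abs x <= powR (p%:R : R) (- e%:R^-1).
Proof.
case=> e_gt0 [abs_val _]; have [->|/abs_val [k ->]] := eqVneq x 0.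
  by rewrite abs0 powR_ge0.
rewrite -[X in _ < X](powRr0 (p%:R : R)) (leW_mono (ler_powR_mono p_gt1R)).
rewrite pmulr_llt0 ?invr_gt0 ?ltr0n // ltrz0 => k_lt0.
rewrite ler_powR_mono // -mulN1r ler_wpM2r ?invr_ge0 ?ler0n //.
have k_le : k <= -1 by lia.
by move: k_le; rewrite -(ler_int R) rmorphN1.
Qed.

End PadicAbsolute.

Lemma ram_index_abs_gt0 (R : realType) (K : fieldType) (abs : K -> R) p e :
  (0 < p)%N -> ram_index abs p e -> forall x, x != 0 -> 0 < abs x.
Proof. by move=> p_gt0 [_ [abs_val _]] x /abs_val [k ->]; rewrite powR_gt0 // ltr0n. Qed.

Theorem lemma3p3 (p : nat) (R : realType) (K : fieldType) (abs : K -> R)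
  (f e : nat) (g : {poly K}) (beta : K) :
  prime p ->
  padic_field abs p ->
  g \is monic ->
  (forall i, in_Zp abs g`_i) ->
  splitting_field_over_Qp abs g ->
  root g beta ->
  abs beta = 1 ->
  ram_index abs p e ->
  residue_degree abs p f ->
  abs ((beta / omega abs p f beta) ^+ qexp R p e - 1)
    < powR (p%:R : R) (- ((p%:R - 1)^-1)).
Proof.
move=> p_prime Kp _ _ _ _ beta_unit ram res_deg.
have abs_gt0 := ram_index_abs_gt0 (prime_gt0 p_prime) ram.
have [u_unit u_close] := abs_div_close p_prime Kp abs_gt0 beta_unit
  (omega_close p_prime Kp abs_gt0 res_deg beta_unit).
apply: (abs_expr_qexp_sub1_lt p_prime Kp abs_gt0 _ u_unit); first by case: ram.
exact: (ram_index_abs_lt1 p_prime Kp ram u_close).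
Qed.
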